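(* Let $\mathbf L=(L,\vee,\wedge,0,1)$ be a complemented lattice with $0\ne1$ and $D$ a deductive system of $\mathbf L$. Then: (i) $D$ is an order filter of $\mathbf L$ (i.e. $a\in D$ and $a\le b$ imply $b\in D$); (ii) if $x\to y\subseteq D$ for all $x,y\in D$, then $D$ is a filter of $\mathbf L$.
   Context: For $a\in L$, $a^+:=\{x\in L\mid a\vee x=1,\ a\wedge x=0\}$ (the set of all complements of $a$), and $a\to b:=\{x\vee(a\wedge b)\mid x\in a^+\}$. A deductive system of $\mathbf L$ is a subset $D\subseteq L$ such that $1\in D$, and whenever $a\in D$, $b\in L$ and $a\to b\subseteq D$, then $b\in D$. A filter is a non-empty order filter closed under $\wedge$. *)

From mathcomp Require Import all_boot all_order.
Set Implicit Arguments. Unset Strict Implicit. Unset Printing Implicit Defensive.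
Import Order.Theory.
Local Open Scope order_scope.

Definition compls {d} {L : tbLatticeType d} (a : L) : L -> Prop :=
  fun x => a `|` x = \top /\ a `&` x = \bot.

Definition complemented {d} (L : tbLatticeType d) : Prop :=
  forall a : L, exists x, compls a x.

Definition arrow {d} {L : tbLatticeType d} (a b : L) : L -> Prop :=
  fun z => exists2 x, compls a x & z = x `|` (a `&` b).

Definition lsubset {T} (A B : T -> Prop) : Prop := forall z, A z -> B z.

Definition deductive_system {d} {L : tbLatticeType d} (D : L -> Prop) : Prop :=
  D \top /\ (forall a b : L, D a -> lsubset (arrow a b) D -> D b).

Definition order_filter {d} {L : tbLatticeType d} (D : L -> Prop) : Prop :=
  forall a b : L, D a -> a <= b -> D b.

Definition lattice_filter {d} {L : tbLatticeType d} (D : L -> Prop) : Prop :=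
  (exists a, D a) /\ order_filter D /\ (forall a b, D a -> D b -> D (a `&` b)).

From mathcomp Require Import all_boot all_order.
Import Order.Theory.
Local Open Scope order_scope.
Set Implicit Arguments.
Unset Strict Implicit.
Unset Printing Implicit Defensive.

(* If a <= b then every x \/ (a /\ b) = x \/ a with x a complement of a is 1,
   so a -> b is contained in any deductive system and b follows from a.
   Since a /\ (a /\ b) = a /\ b, the sets a -> (a /\ b) and a -> b coincide,
   so closure of D under arrows yields closure under meets. *)

Section Arrow.
Variables (d : Order.disp_t) (L : tbLatticeType d).
Implicit Types a b z : L.

Lemma arrow_le_top a b z : a <= b -> arrow a b z -> z = \top.
Proof. by move=> le_ab [x [join_ax _] ->]; rewrite (meet_idPl le_ab) joinC. Qed.

Lemma arrow_meetr a b z : arrow a (a `&` b) z -> arrow a b z.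
Proof. by move=> [x compl_x ->]; exists x; rewrite // meetA meetxx. Qed.

End Arrow.

Section DeductiveSystem.
Variables (d : Order.disp_t) (L : tbLatticeType d) (D : L -> Prop).
Hypothesis dsD : deductive_system D.

Lemma deductive_system_order_filter : order_filter D.
Proof.
case: dsD => Dtop mpD a b Da le_ab; apply: (mpD a b Da) => z /(arrow_le_top le_ab).
by move->.
Qed.

Lemma deductive_system_meet_closed :
  (forall x y : L, D x -> D y -> lsubset (arrow x y) D) ->
  forall a b : L, D a -> D b -> D (a `&` b).
Proof.
case: dsD => _ mpD arrowD a b Da Db; apply: (mpD a _ Da) => z /arrow_meetr.
exact: arrowD.
Qed.

Lemma deductive_system_lattice_filter :
  (forall x y : L, D x -> D y -> lsubset (arrow x y) D) -> lattice_filter D.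
Proof.
move=> arrowD; split; first by exists \top; case: dsD.
split; first exact: deductive_system_order_filter.
exact: deductive_system_meet_closed.
Qed.

End DeductiveSystem.

Theorem lemma1 (d : Order.disp_t) (L : tbLatticeType d) (D : L -> Prop) :
  complemented L -> (\bot : L) != \top -> deductive_system D ->
  order_filter D /\
  ((forall x y : L, D x -> D y -> lsubset (arrow x y) D) -> lattice_filter D).
Proof.
move=> _ _ dsD; split.
- exact: deductive_system_order_filter.
- exact: deductive_system_lattice_filter.
Qed.
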